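(* Let $(\mathbb S,+,\cdot)$ be an S-Ring. Then $(\mathbb S,\cdot)$ is not associative.
   Context: An S-Structure is a triple $(\mathbb S,+,\cdot)$ where $\mathbb S$ is a set and $+,\cdot$ are binary operations on $\mathbb S$ such that: $(\mathbb S,+)$ is a commutative group with identity $0$ (the inverse of $s$ is written $-s$, and $s-t:=s+(-t)$); $\mathbb S$ is closed under $\cdot$; and there exists $s\in\mathbb S$ with $0\cdot s\neq 0$ or $s\cdot 0\neq 0$. Multiplication binds tighter than addition. The structures considered come with a distinguished element of $\mathbb S$ denoted $1$. It is Commutative if $s\cdot t=t\cdot s$ for all $s,t$. For a Commutative S-Structure and $\alpha\in\mathbb S$, put $\mathbb S_\alpha=\{s\in\mathbb S:0\cdot s=s\cdot 0=\alpha\}$ and $\Lambda=\{\alpha\in\mathbb S:\mathbb S_\alpha\neq\emptyset\}$. Wheel Distributive: $s\cdot(t+r)+(s\cdot 0)=(s\cdot t)+(s\cdot r)$ for all $s,t,r\in\mathbb S$. S-Associative: for all $m,n\in\mathbb S_0$ and $s\in\mathbb S$, $m\cdot(n\cdot s)=(m\cdot n)\cdot s-([(m-1)\cdot(n-1)]\cdot(0\cdot s))$. Base: if $\mathbb S_0\neq\emptyset$ and $\alpha\in\Lambda$, $q\in\mathbb S_\alpha$ is a Base for $\mathbb S_\alpha$ if $q+\beta\in\mathbb S_\alpha$ for all $\beta\in\mathbb S_0$ and every $s\in\mathbb S_\alpha$ equals $q+\beta$ for some $\beta\in\mathbb S_0$. Coordinated: $\mathbb S_0\neq\emptyset$ and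 every $\mathbb S_\alpha$ with $\alpha\in\Lambda$ has a Base. Standard Bases: a Coordinated Commutative S-Structure has Standard Bases if there is a specified element $q_0(1)\in\mathbb S_1$ which is a Base for $\mathbb S_1$, and for every $\alpha\in\Lambda$ the element $q_0(\alpha):=\alpha\cdot(q_0(1)+1)-1$ lies in $\mathbb S_\alpha$ and is a Base for $\mathbb S_\alpha$. An Essential S-Structure is an S-Structure that is Commutative, Wheel Distributive, S-Associative, has Standard Bases (in particular is Coordinated), satisfies $0,1\in\mathbb S_0$, and satisfies $\mathbb S_0=\{1\cdot x:x\in\mathbb S_0\}$. A Unity is an element $e\in\Lambda$ with $e\cdot s=s\cdot e=s$ for all $s\in\mathbb S$. An S-Ring is an Essential S-Structure which has a Unity. *)

(* The additive commutative group (S,+) is a zmodType V;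
   the multiplication of the S-Structure is an arbitrary binary operation
   [mul] on V (not a ring multiplication); [one] is the distinguished 1. *)
From HB Require Import structures.
From mathcomp Require Import all_boot all_algebra.
Set Implicit Arguments. Unset Strict Implicit. Unset Printing Implicit Defensive.
Import GRing.Theory.
Local Open Scope ring_scope.

Section SStructure.
Variables (V : zmodType) (mul : V -> V -> V) (one : V).
Local Notation "s ** t" := (mul s t) (at level 40, left associativity).

(* S-Structure: some s with 0*s <> 0 or s*0 <> 0 (closure is automatic) *)
Definition is_SStructure : Prop := exists s : V, 0 ** s <> 0 \/ s ** 0 <> 0.

Definition SCommutative : Prop := forall s t : V, s ** t = t ** s.

Definition Sset (alpha : V) : V -> Prop := fun s => 0 ** s = alpha /\ s ** 0 = alpha.

Definition Lambda : V -> Prop := fun alpha => exists s, Sset alpha s.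

Definition WheelDistributive : Prop :=
  forall s t r : V, s ** (t + r) + s ** 0 = s ** t + s ** r.

Definition SAssociative : Prop :=
  forall m n s : V, Sset 0 m -> Sset 0 n ->
    m ** (n ** s) = (m ** n) ** s - ((m - one) ** (n - one)) ** (0 ** s).

Definition IsBase (alpha q : V) : Prop :=
  Sset alpha q /\
  (forall beta, Sset 0 beta -> Sset alpha (q + beta)) /\
  (forall s, Sset alpha s -> exists beta, Sset 0 beta /\ s = q + beta).

Definition Coordinated : Prop :=
  (exists s, Sset 0 s) /\ (forall alpha, Lambda alpha -> exists q, IsBase alpha q).

Definition q0 (q01 alpha : V) : V := alpha ** (q01 + one) - one.

Definition StandardBases : Prop :=
  Coordinated /\
  exists q01 : V, Sset one q01 /\ IsBase one q01 /\
    forall alpha, Lambda alpha ->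
      Sset alpha (q0 q01 alpha) /\ IsBase alpha (q0 q01 alpha).

Definition Essential : Prop :=
  is_SStructure /\ SCommutative /\ WheelDistributive /\ SAssociative /\
  StandardBases /\ Sset 0 0 /\ Sset 0 one /\
  (forall s, Sset 0 s <-> exists x, Sset 0 x /\ s = one ** x).

Definition IsUnity (e : V) : Prop :=
  Lambda e /\ forall s, e ** s = s /\ s ** e = s.

Definition SRing : Prop := Essential /\ exists e, IsUnity e.

Definition MulAssociative : Prop :=
  forall a b c : V, a ** (b ** c) = (a ** b) ** c.

End SStructure.

From mathcomp Require Import all_boot all_algebra.
Import GRing.Theory.
Local Open Scope ring_scope.

(* If the multiplication were associative, the correction term of
   S-associativity would vanish: for m = n = 0 it gives
   ((-1)(-1))(0 s) = 0.  Wheel distributivity yields 0 (-1) = 0, so 0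
   annihilates (-1)(-1), and commutativity with associativity turn the
   left-hand side into 0 s.  Hence 0 s = 0 for all s, which an
   S-Structure forbids. *)

Section AssociativeSStructure.
Variables (V : zmodType) (mul : V -> V -> V) (one : V).
Local Notation "s ** t" := (mul s t) (at level 40, left associativity).

Hypothesis mulC : SCommutative mul.
Hypothesis wheel : WheelDistributive mul.
Hypothesis sassoc : SAssociative mul one.
Hypothesis assoc : MulAssociative mul.
Hypothesis zero_in_S0 : Sset mul 0 0.
Hypothesis mul0_one : 0 ** one = 0.

Lemma wheel_mulN (s t : V) : s ** (- t) = s ** 0 *+ 2 - s ** t.
Proof. by rewrite mulr2n -{1}(subrr t) wheel addrC addKr. Qed.

Lemma assoc_SAssociative_defect (m n s : V) :
  Sset mul 0 m -> Sset mul 0 n -> ((m - one) ** (n - one)) ** (0 ** s) = 0.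
Proof.
move=> m_in_S0 n_in_S0; apply: oppr_inj; apply: (addrI ((m ** n) ** s)).
by rewrite oppr0 addr0 -sassoc // assoc.
Qed.

Lemma mul0_oppone : 0 ** - one = 0.
Proof. by rewrite wheel_mulN zero_in_S0.1 mul0_one mul0rn subr0. Qed.

Lemma mul0s (s : V) : 0 ** s = 0.
Proof.
have mul0_sqr_oppone : 0 ** ((- one) ** (- one)) = 0.
  by rewrite assoc !mul0_oppone.
have := assoc_SAssociative_defect 0 0 s zero_in_S0 zero_in_S0.
by rewrite sub0r assoc (mulC _ 0) mul0_sqr_oppone.
Qed.

End AssociativeSStructure.

Theorem corollary3p2p2 (V : zmodType) (mul : V -> V -> V) (one : V) :
  SRing mul one -> ~ MulAssociative mul.
Proof.
move=> [[[s s_nonzero] [mulC [wheel [sassoc [_ [S00 [[mul0_one _] _]]]]]]] _] assoc.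
have mul0 := @mul0s V mul one mulC wheel sassoc assoc S00 mul0_one.
by case: s_nonzero; apply; [exact: mul0 | rewrite mulC mul0].
Qed.
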